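(* For every $v\equiv 0\pmod 4$ with $v\geq 12$ there exists a connected symmetric configuration $v_3$ with strong chromatic number exactly 5.
   Context: A symmetric configuration $v_3$ consists of a set of $v$ points and a collection of $v$ blocks, each block being a 3-element subset of the points, such that every point lies in exactly 3 blocks and any two distinct points lie in at most one common block; it is connected if it is not the union of two configurations on disjoint nonempty point sets. A strong colouring is an assignment of colours to points such that the three points of every block receive three distinct colours; the strong chromatic number is the minimum number of colours in a strong colouring. *)

From mathcomp Require Import all_boot.
Set Implicit Arguments. Unset Strict Implicit. Unset Printing Implicit Defensive.

Definition sym_config3 (v : nat) (B : 'I_v -> {set 'I_v}) : Prop :=
  (forall b, #|B b| = 3) /\
  (forall p : 'I_v, #|[set b | p \in B b]| = 3) /\
  (forall p q : 'I_v, p != q -> #|[set b | (p \in B b) && (q \in B b)]| <= 1).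

(* Connected: not the union of two configurations on disjoint nonempty
   point sets, i.e. there is no partition of the points into two nonempty
   parts P, ~: P such that every block lies entirely inside one part. *)
Definition config_connected (v : nat) (B : 'I_v -> {set 'I_v}) : Prop :=
  ~ exists P : {set 'I_v},
      [/\ P != set0, ~: P != set0 &
          forall b, (B b \subset P) \/ (B b \subset ~: P)].

Definition strong_colouring (v k : nat) (B : 'I_v -> {set 'I_v})
    (c : 'I_v -> 'I_k) : Prop :=
  forall b, {in B b &, injective c}.

Definition strong_colourable (v k : nat) (B : 'I_v -> {set 'I_v}) : Prop :=
  exists c : 'I_v -> 'I_k, strong_colouring B c.

Definition strong_chromatic_number_eq (v : nat) (B : 'I_v -> {set 'I_v})
    (n : nat) : Prop :=
  strong_colourable n B /\ (forall k, k < n -> ~ strong_colourable k B).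

From mathcomp Require Import all_boot zify.
Set Implicit Arguments. Unset Strict Implicit. Unset Printing Implicit Defensive.

(* Its
   blocks are indexed by 0 <= b < v: for b >= 7 block b is the cyclic
   translate {b, b+1, b+3} (mod v) of the difference set {0,1,3}; the seven
   cyclic blocks with b < 7 are traded for seven "exceptional" blocks on the
   points 0..9, through each point as many as the cyclic blocks replaced.
   - The axioms of a configuration are checked on natural numbers: the
     blocks through a point are listed explicitly (the dual table), and two
     blocks sharing two points coincide.  These are finite case analyses
     combined with linear arithmetic for the cyclic part.
   - Connectedness: the cyclic blocks chain the points 7, 8, ..., v-1
     together, and every point below 7 lies on a block with one of them.
   - Strong chromatic number 5: an explicit colouring (residue mod 4 away
     from the exceptional points) gives the upper bound; the points 2..6 are
     pairwise collinear, and a set of pairwise collinear points needs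
     pairwise distinct colours, which gives the lower bound. *)

Definition collinear (v : nat) (B : 'I_v -> {set 'I_v}) : rel 'I_v :=
  fun x y => [exists b, (x \in B b) && (y \in B b)].

Lemma card_ord_set_of_seq v (s : seq nat) :
  uniq s -> all (fun x => x < v) s -> #|[set x : 'I_v | val x \in s]| = size s.
Proof.
move=> s_uniq s_lt.
have -> : [set x : 'I_v | val x \in s] = [set x in pmap insub s].
  by apply/setP => x; rewrite !inE mem_pmap_sub.
rewrite cardsE.
have /card_uniqP -> : uniq (pmap (insub : nat -> option 'I_v) s).
  exact: pmap_sub_uniq.
by rewrite size_pmap_sub; apply/eqP; rewrite -all_count.
Qed.

(* A strong colouring is injective on any set of pairwise collinear points,
   so such a set bounds the number of colours from below. *)
Lemma clique_lower_bound v k (B : 'I_v -> {set 'I_v}) (S : {set 'I_v}) :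
  {in S &, forall x y, x != y -> collinear B x y} ->
  strong_colourable k B -> #|S| <= k.
Proof.
move=> S_clique [c c_strong]; rewrite -[k]card_ord.
apply: (@leq_card_in _ _ c) => x y x_in y_in same_colour.
case: (eqVneq x y) => // /(S_clique x y x_in y_in) /existsP[b /andP[xb yb]].
exact: c_strong xb yb same_colour.
Qed.

(* A configuration is connected as soon as every point can be reached from
   one fixed point through a chain of collinear points: a block never
   crosses a splitting of the points, so neither does such a chain. *)
Lemma connected_of_root v (B : 'I_v -> {set 'I_v}) :
  (exists x0, forall x, connect (collinear B) x0 x) -> config_connected B.
Proof.
move=> [x0 reach] [P [/set0Pn[x xP] /set0Pn[y yPc] B_split]].
have P_closed : closed (collinear B) P.
  move=> p q /existsP[b /andP[pb qb]].
  case: (B_split b) => /subsetP B_sub; first by rewrite (B_sub p pb) (B_sub q qb).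
  by move: (B_sub p pb) (B_sub q qb); rewrite !inE => /negbTE-> /negbTE->.
move: yPc; rewrite inE -(closed_connect P_closed (reach y)).
by rewrite (closed_connect P_closed (reach x)) xP.
Qed.

Definition shift (v x k : nat) : nat := if x + k < v then x + k else x + k - v.

Definition exceptional_block (b : nat) : seq nat :=
  nth [::] [:: [:: 8; 4; 3]; [:: 9; 6; 4]; [:: 5; 3; 1]; [:: 5; 4; 2];
               [:: 0; 7; 1]; [:: 2; 6; 3]; [:: 5; 6; 7]] b.

Definition block (v b : nat) : seq nat :=
  if b < 7 then exceptional_block b else [:: b; shift v b 1; shift v b 3].

Definition blocks_through (v p : nat) : seq nat :=
  if p < 10 then
    nth [::] [:: [:: 4; v - 3; v - 1]; [:: 2; 4; v - 2]; [:: 3; 5; v - 1];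
                 [:: 0; 2; 5]; [:: 0; 1; 3]; [:: 2; 3; 6]; [:: 1; 5; 6];
                 [:: 4; 6; 7]; [:: 0; 7; 8]; [:: 1; 8; 9]] p
  else [:: p - 3; p - 1; p].

(* A colouring with 5 colours: the residue mod 4 except on 0..4, where the
   exceptional blocks force other choices and colour 4 is used. *)
Definition colour (p : nat) : nat :=
  if p == 0 then 4 else if p == 1 then 0 else if p == 2 then 0 else
  if p == 3 then 3 else if p == 4 then 4 else p %% 4.

Definition proper_triple (v : nat) (s : seq nat) : bool :=
  [&& uniq s, all (fun x => x < v) s & size s == 3].

Ltac revert_about x := repeat match goal with H : context[x] |- _ => revert H end.
Ltac cases_below7 x :=
  revert_about x; case: x => [|[|[|[|[|[|[|x]]]]]]]; intros; [..|exfalso; lia].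
Ltac cases_below10 x :=
  revert_about x; case: x => [|[|[|[|[|[|[|[|[|[|x]]]]]]]]]]; intros;
  [..|exfalso; lia].

Ltac split_arith :=
  repeat match goal with H : ?T |- _ =>
    match type of T with Prop => revert H end end;
  rewrite /shift ?in_cons ?in_nil /=; repeat (case: ifP => ?); intros; lia.

Section NatModel.

Variable v : nat.
Hypothesis v_ge12 : 12 <= v.

Lemma block_proper b : b < v -> proper_triple v (block v b).
Proof.
move=> b_lt; rewrite /proper_triple /block; case: (ltnP b 7) => b_small.
- by cases_below7 b; apply/and3P; split; split_arith.
- by apply/and3P; split; rewrite //= ?andbT; split_arith.
Qed.

Lemma blocks_through_proper p : p < v -> proper_triple v (blocks_through v p).
Proof.
move=> p_lt; rewrite /proper_triple /blocks_through.
case: (ltnP p 10) => p_small.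
- by cases_below10 p; apply/and3P; split; rewrite //= ?andbT; split_arith.
- by apply/and3P; split; rewrite //= ?andbT; split_arith.
Qed.

Lemma mem_block_through p b : b < v -> p < v ->
  (p \in block v b) = (b \in blocks_through v p).
Proof.
move=> b_lt p_lt; rewrite /block /blocks_through.
case: (ltnP b 7) => b_small; case: (ltnP p 10) => p_small.
- by cases_below7 b; cases_below10 p; split_arith.
- by cases_below7 b; split_arith.
- by cases_below10 p; split_arith.
- by split_arith.
Qed.

Lemma block_unique b1 b2 p q : b1 < v -> b2 < v -> p < v -> q < v -> p != q ->
  p \in block v b1 -> q \in block v b1 -> p \in block v b2 -> q \in block v b2 ->
  b1 = b2.
Proof.
move=> b1_lt b2_lt p_lt q_lt; rewrite /block.
case: (ltnP b1 7) => b1_small; case: (ltnP b2 7) => b2_small.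
- by cases_below7 b1; cases_below7 b2; split_arith.
- by cases_below7 b1; split_arith.
- by cases_below7 b2; split_arith.
- by split_arith.
Qed.

Lemma colour_block b p q : v %% 4 = 0 -> b < v -> p < v -> q < v ->
  p \in block v b -> q \in block v b -> colour p = colour q -> p = q.
Proof.
move=> v_mod4 b_lt p_lt q_lt; rewrite /block /colour.
case: (ltnP b 7) => b_small.
- by cases_below7 b; split_arith.
- by split_arith.
Qed.

Lemma block_consecutive m : 7 <= m -> m.+1 < v ->
  (m \in block v m) && (m.+1 \in block v m).
Proof. by move=> m_ge7 m_lt; rewrite /block ltnNge m_ge7 /=; split_arith. Qed.

End NatModel.

Lemma colour_lt5 p : colour p < 5.
Proof. by rewrite /colour; repeat case: ifP => _; lia. Qed.

Lemma exceptional_points_collinear x y : 2 <= x < 7 -> 2 <= y < 7 -> x != y ->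
  exists2 b, b < 7 & (x \in exceptional_block b) && (y \in exceptional_block b).
Proof.
have all_pairs : all (fun x => all (fun y => (x == y) || has (fun b =>
    (x \in exceptional_block b) && (y \in exceptional_block b)) (iota 0 7))
    (iota 2 5)) (iota 2 5) by [].
move=> x_range y_range /negPf x_neq_y.
have x_in : x \in iota 2 5 by rewrite mem_iota; lia.
have y_in : y \in iota 2 5 by rewrite mem_iota; lia.
have := allP (allP all_pairs x x_in) y y_in.
by rewrite x_neq_y => /hasP[b]; rewrite mem_iota => b_lt7 xy_in_b; exists b.
Qed.

Section Configuration.

Variable v : nat.
Hypothesis v_ge12 : 12 <= v.

Definition config (b : 'I_v) : {set 'I_v} := [set p | val p \in block v b].

Lemma config_sym : sym_config3 config.
Proof.
have card_triple s : proper_triple v s -> #|[set x : 'I_v | val x \in s]| = 3.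
  by case/and3P => s_uniq s_lt /eqP s_size; rewrite card_ord_set_of_seq.
split; [|split].
- by move=> b; apply: card_triple; apply: block_proper.
- move=> p; rewrite -(card_triple _ (blocks_through_proper v_ge12 (ltn_ord p))).
  by apply: eq_card => b; rewrite !inE (mem_block_through v_ge12) ?ltn_ord.
- move=> p q p_neq_q; apply/card_le1_eqP => b1 b2; rewrite !inE.
  move=> /andP[p_b1 q_b1] /andP[p_b2 q_b2]; apply: val_inj.
  by apply: (@block_unique v v_ge12 _ _ (val p) (val q)); rewrite ?ltn_ord.
Qed.

Let point (x : nat) : 'I_v :=
  insubd (Ordinal (leq_trans (isT : 1 <= 12) v_ge12)) x.

Let pointK x : x < v -> val (point x) = x.
Proof. by move=> x_lt; rewrite val_insubd x_lt. Qed.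

Lemma config_reachable : exists x0, forall x, connect (collinear config) x0 x.
Proof.
pose e := collinear config.
have edge p q b : b < v -> p \in block v b -> q \in block v b ->
    connect e (point p) (point q).
  move=> b_lt p_in q_in; apply: connect1; apply/existsP; exists (Ordinal b_lt).
  have /and3P[_ /allP block_lt _] := block_proper v_ge12 b_lt.
  by rewrite !inE !pointK ?p_in ?q_in ?block_lt.
have chain k : 7 + k < v -> connect e (point 7) (point (7 + k)).
  elim: k => [|k IH] k_lt; first exact: connect0.
  have /andP[k_in k1_in] :=
    block_consecutive v_ge12 (leq_addr k 7) (k_lt : (7 + k).+1 < v).
  by apply: connect_trans (IH _) (edge _ _ _ _ k_in k1_in); lia.
have c78 : connect e (point 7) (point 8) by apply: (chain 1); lia.
have small p : p < 7 -> connect e (point 7) (point p).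
  case: p => [|[|[|[|[|[|[|p]]]]]]] p_lt; last lia.
  - by apply: (edge 7 0 4) => //; lia.
  - by apply: (edge 7 1 4) => //; lia.
  - by apply: connect_trans (edge 7 5 6 _ _ _) (edge 5 2 3 _ _ _) => //; lia.
  - by apply: connect_trans c78 (edge 8 3 0 _ _ _) => //; lia.
  - by apply: connect_trans c78 (edge 8 4 0 _ _ _) => //; lia.
  - by apply: (edge 7 5 6) => //; lia.
  - by apply: (edge 7 6 6) => //; lia.
exists (point 7) => x.
have -> : x = point (val x) by apply: val_inj; rewrite pointK ?ltn_ord.
case: (ltnP (val x) 7) => [/small // | x_ge7].
by rewrite -(subnKC x_ge7); apply: chain; rewrite subnKC ?ltn_ord.
Qed.

Lemma config_colourable : v %% 4 = 0 -> strong_colourable 5 config.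
Proof.
move=> v_mod4; exists (fun p => inord (colour (val p))) => b p q.
rewrite !inE => p_in q_in /(congr1 (@nat_of_ord _)).
rewrite !inordK ?colour_lt5 // => same_colour; apply: val_inj.
exact: (colour_block v_ge12 v_mod4 (ltn_ord b) (ltn_ord p) (ltn_ord q)).
Qed.

Lemma config_not_colourable k : k < 5 -> ~ strong_colourable k config.
Proof.
move=> k_lt5 k_colourable.
have S_card : #|[set x : 'I_v | val x \in iota 2 5]| = 5.
  rewrite card_ord_set_of_seq ?iota_uniq ?size_iota //.
  by apply/allP => x; rewrite mem_iota; lia.
suff : 5 <= k by lia.
rewrite -S_card; apply: clique_lower_bound k_colourable.
move=> x y; rewrite !in_set !mem_iota => x_range y_range x_neq_y.
have [b b_lt7 /andP[x_b y_b]] :=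
  exceptional_points_collinear x_range y_range x_neq_y.
have b_lt : b < v by lia.
apply/existsP; exists (Ordinal b_lt).
by rewrite !inE /block b_lt7 x_b y_b.
Qed.

End Configuration.

Theorem mainTheorem19 (v : nat) :
  v %% 4 = 0 -> 12 <= v ->
  exists B : 'I_v -> {set 'I_v},
    [/\ sym_config3 B, config_connected B & strong_chromatic_number_eq B 5].
Proof.
move=> v_mod4 v_ge12; exists (@config v); split.
- exact: config_sym.
- exact/connected_of_root/config_reachable.
- split; [exact: config_colourable | exact: config_not_colourable].
Qed.
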